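(* Let $\phi(a)=(1-a)^2$ and assume $\Omega$ is differentiable, so that $R_\phi$ and each $R^{\mathrm{semi}}_\phi(\cdot,\mathbf{q})$ are convex and differentiable; let $\mathbf{w}_{\mathrm{sup}}$ be a minimizer of $R_\phi$. Then: (a) For $\mathbf{q}\in[0,1]^U$, $\mathbf{w}_{\mathrm{sup}}$ minimizes $R^{\mathrm{semi}}_\phi(\cdot,\mathbf{q})$ if and only if $\mathbf{X}_{\mathrm{u}}^\top\mathbf{q}=\tfrac12\big(\mathbf{X}_{\mathrm{u}}^\top\mathbf{1}+\mathbf{X}_{\mathrm{u}}^\top\mathbf{X}_{\mathrm{u}}\mathbf{w}_{\mathrm{sup}}\big)$, where $\mathbf{1}\in\mathbb{R}^U$ is the all-ones vector. (b) If $\mathbf{X}_{\mathrm{u}}$ has rank $U$ (so $d\ge U$) and $\mathbf{X}_{\mathrm{u}}\mathbf{w}_{\mathrm{sup}}\notin[-1,1]^U$, then no $\mathbf{q}\in[0,1]^U$ makes $\mathbf{w}_{\mathrm{sup}}$ a minimizer of $R^{\mathrm{semi}}_\phi(\cdot,\mathbf{q})$, i.e. $\mathbf{w}_{\mathrm{sup}}\notin\mathcal{C}_\phi$. (c) If $\|\mathbf{X}_{\mathrm{u}}\mathbf{w}_{\mathrm{sup}}\|_2>\sqrt{U}$, then no $\mathbf{q}\in[0,1]^U$ makes $\mathbf{w}_{\mathrm{sup}}$ a minimizer of $R^{\mathrm{semi}}_\phi(\cdot,\mathbf{q})$, i.e. $\mathbf{w}_{\mathrm{sup}}\notin\mathc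al{C}_\phi$.
   Context: Fix integers $L,U,d\ge 1$. Let $\mathbf{X}\in\mathbb{R}^{L\times d}$ be a matrix whose rows $\mathbf{x}_1^\top,\dots,\mathbf{x}_L^\top$ are the labeled objects, with labels $\mathbf{y}\in\{-1,+1\}^L$. Let $\mathbf{X}_{\mathrm{u}}\in\mathbb{R}^{U\times d}$ be a matrix whose rows $\mathbf{x}_{\mathrm{u},1}^\top,\dots,\mathbf{x}_{\mathrm{u},U}^\top$ are the unlabeled objects. Let $\phi:\mathbb{R}\to\mathbb{R}$ be a loss function, $\Omega:\mathbb{R}^d\to\mathbb{R}$ a convex function and $\lambda\ge 0$. The supervised risk is $R_\phi(\mathbf{w})=\sum_{i=1}^L\phi(y_i\mathbf{x}_i^\top\mathbf{w})+\lambda\Omega(\mathbf{w})$. For responsibilities $\mathbf{q}\in[0,1]^U$ the semi-supervised risk is $R^{\mathrm{semi}}_\phi(\mathbf{w},\mathbf{q})=R_\phi(\mathbf{w})+\sum_{j=1}^U\big[q_j\phi(\mathbf{x}_{\mathrm{u},j}^\top\mathbf{w})+(1-q_j)\phi(-\mathbf{x}_{\mathrm{u},j}^\top\mathbf{w})\big]$. The constraint set is $\mathcal{C}_\phi=\{\mathbf{w}\in\mathbb{R}^d:\ \exists\,\mathbf{q}\in[0,1]^U \text{ such that } \mathbf{w} \text{ minimizes } R^{\mathrm{semi}}_\phi(\cdot,\mathbf{q})\}$. *)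

From HB Require Import structures.
From mathcomp Require Import all_boot all_order all_algebra.
Set Implicit Arguments. Unset Strict Implicit. Unset Printing Implicit Defensive.
Import Order.TTheory GRing.Theory Num.Theory.
Local Open Scope ring_scope.

Section Defs.
Variable R : rcfType.

Definition norm2 (n : nat) (v : 'cV[R]_n) : R :=
  Num.sqrt (\sum_(i < n) v i 0 ^+ 2).

Definition convex_fun (d : nat) (f : 'cV[R]_d -> R) : Prop :=
  forall (x y : 'cV[R]_d) (t : R), 0 <= t -> t <= 1 ->
    f ((1 - t) *: x + t *: y) <= (1 - t) * f x + t * f y.

Definition differentiable_at (d : nat) (f : 'cV[R]_d -> R) (w : 'cV[R]_d) : Prop :=
  exists g : 'cV[R]_d, forall eps : R, 0 < eps -> exists delta : R, 0 < delta /\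
    forall h : 'cV[R]_d, norm2 h < delta ->
      `| f (w + h) - f w - (g^T *m h) 0 0 | <= eps * norm2 h.

Definition differentiable_fun (d : nat) (f : 'cV[R]_d -> R) : Prop :=
  forall w, differentiable_at f w.

Definition minimizes (d : nat) (f : 'cV[R]_d -> R) (w : 'cV[R]_d) : Prop :=
  forall v, f w <= f v.

Definition sqloss (a : R) : R := (1 - a) ^+ 2.

Definition Rsup (L d : nat) (phi : R -> R) (X : 'M[R]_(L, d)) (y : 'cV[R]_L)
  (Omega : 'cV[R]_d -> R) (lambda : R) (w : 'cV[R]_d) : R :=
  \sum_(i < L) phi (y i 0 * (X *m w) i 0) + lambda * Omega w.

Definition Rsemi (L U d : nat) (phi : R -> R) (X : 'M[R]_(L, d)) (y : 'cV[R]_L)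
  (Xu : 'M[R]_(U, d)) (Omega : 'cV[R]_d -> R) (lambda : R)
  (w : 'cV[R]_d) (q : 'cV[R]_U) : R :=
  Rsup phi X y Omega lambda w +
  \sum_(j < U) (q j 0 * phi ((Xu *m w) j 0) + (1 - q j 0) * phi (- (Xu *m w) j 0)).

Definition in_unit_box (U : nat) (q : 'cV[R]_U) : Prop :=
  forall j : 'I_U, 0 <= q j 0 /\ q j 0 <= 1.

Definition Cphi (L U d : nat) (phi : R -> R) (X : 'M[R]_(L, d)) (y : 'cV[R]_L)
  (Xu : 'M[R]_(U, d)) (Omega : 'cV[R]_d -> R) (lambda : R) (w : 'cV[R]_d) : Prop :=
  exists q : 'cV[R]_U, in_unit_box q /\
    minimizes (fun v => Rsemi phi X y Xu Omega lambda v q) w.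

End Defs.

(* Writing [r = 1 + Xu w - 2 q], the gradient of the unlabeled part of the semi-supervised
   risk is [2 Xu^T r], and that part is an exact quadratic in [w] with positive semidefinite
   Hessian.  Since [Omega] is differentiable, so is the supervised risk, and its directional
   derivatives vanish at its minimizer [wsup]; hence [wsup] minimizes the semi-supervised risk
   iff [Xu^T r = 0], which is (a).  If [Xu] has full row rank this forces [r = 0], i.e.
   [Xu wsup = 2 q - 1 \in [-1,1]^U], which is (b).  In general [Xu^T r = 0] gives
   [(Xu wsup)^T r = 0], and summing [a^2 <= 1 + 2 a (1 + a - 2 c)] (valid for [c \in [0,1]])
   over the entries yields [|Xu wsup|^2 <= U], which is (c). *)
From HB Require Import structures.
From mathcomp Require Import all_boot all_order all_algebra.
From mathcomp Require Import ring lra.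
Import Order.TTheory GRing.Theory Num.Theory.
Local Open Scope ring_scope.

Set Implicit Arguments. Unset Strict Implicit. Unset Printing Implicit Defensive.

Section LittleO.
Variable R : realFieldType.

Definition littleo0 (r : R -> R) : Prop :=
  forall eps : R, 0 < eps -> exists2 delta : R, 0 < delta &
    forall t : R, `|t| < delta -> `|r t| <= eps * `|t|.

Lemma eq_littleo0 (r s : R -> R) : (forall t, r t = s t) -> littleo0 r -> littleo0 s.
Proof.
move=> rs hr eps heps; have [delta hd hrd] := hr eps heps.
by exists delta => // t; rewrite -rs; apply: hrd.
Qed.

Lemma littleo0D (r s : R -> R) : littleo0 r -> littleo0 s -> littleo0 (fun t => r t + s t).
Proof.
move=> hr hs eps heps; have heps2 : 0 < eps / 2 by rewrite divr_gt0.
have [dr hdr hr'] := hr _ heps2; have [ds hds hs'] := hs _ heps2.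
exists (Num.min dr ds); first by rewrite lt_min hdr hds.
move=> t; rewrite lt_min => /andP[/hr' htr /hs' hts].
by rewrite (le_trans (ler_normD _ _)) // [X in _ <= X * _](splitr eps) mulrDl lerD.
Qed.

Lemma littleo0Z (a : R) (r : R -> R) : littleo0 r -> littleo0 (fun t => a * r t).
Proof.
move=> hr eps heps; have ha : 0 < `|a| + 1 by rewrite ltr_wpDl.
have [delta hd hrd] := hr _ (divr_gt0 heps ha).
exists delta => // t /hrd ht; rewrite normrM.
apply: le_trans (ler_wpM2l (normr_ge0 a) ht) _.
rewrite mulrA ler_wpM2r // mulrCA; apply: ler_piMr; first exact: ltW.
by rewrite ler_pdivrMr // mul1r lerDl.
Qed.

Lemma littleo0_sqr (M : R) : littleo0 (fun t => t ^+ 2 * M).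
Proof.
move=> eps heps; have hM : 0 < `|M| + 1 by rewrite ltr_wpDl.
exists (eps / (`|M| + 1)); first by rewrite divr_gt0.
move=> t ht; rewrite normrM normrX expr2 -mulrA mulrC ler_wpM2r //.
have hM' : `|M| <= `|M| + 1 by rewrite lerDl.
rewrite ltr_pdivlMr // in ht.
by apply: le_trans (ltW ht); rewrite ler_wpM2l.
Qed.

(* Evaluate at a small [t] of sign opposite to [k]. *)
Lemma littleo0_linear_ge0 (k : R) (r : R -> R) :
  littleo0 r -> (forall t, 0 <= t * k + r t) -> k = 0.
Proof.
move=> hr hge; apply/eqP/negPn/negP => hk.
have hk0 : 0 < `|k| by rewrite normr_gt0.
have [delta hd hrd] := hr (`|k| / 2) (divr_gt0 hk0 (ltr0Sn _ 1)).
pose t := - Num.sg k * (delta / 2).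
have ht : `|t| = delta / 2 by rewrite normrM normrN normr_sg hk gtr0_norm ?mul1r ?divr_gt0.
have htk : t * k = - (`|k| * (delta / 2)) by rewrite /t normrEsg; ring.
have hrt : `|r t| <= `|k| / 2 * (delta / 2) by rewrite -ht hrd // ht ltr_pdivrMr ?ltr_pMr ?ltr1n.
have := hge t; rewrite htk; have := ler_norm (r t).
nra.
Qed.

End LittleO.

Section DirectionalDerivative.
Variables (R : rcfType) (d : nat).
Implicit Types (f g : 'cV[R]_d -> R) (w h : 'cV[R]_d).

Definition has_dir_deriv f w h (c : R) : Prop :=
  littleo0 (fun t => f (w + t *: h) - f w - t * c).

Lemma dir_deriv_min0 f w h c : minimizes f w -> has_dir_deriv f w h c -> c = 0.
Proof.
move=> hmin hc; apply: (littleo0_linear_ge0 hc) => t.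
by rewrite addrC subrK subr_ge0.
Qed.

Lemma dir_derivD f g w h c c' :
  has_dir_deriv f w h c -> has_dir_deriv g w h c' ->
  has_dir_deriv (fun v => f v + g v) w h (c + c').
Proof. by move=> hf hg; apply: eq_littleo0 (littleo0D hf hg) => t; ring. Qed.

Lemma dir_derivZ (a : R) f w h c :
  has_dir_deriv f w h c -> has_dir_deriv (fun v => a * f v) w h (a * c).
Proof. by move=> hf; apply: eq_littleo0 (littleo0Z a hf) => t; ring. Qed.

Lemma dir_deriv_quadratic f w h c M :
  (forall t, f (w + t *: h) = f w + t * c + t ^+ 2 * M) -> has_dir_deriv f w h c.
Proof. by move=> hf; apply: eq_littleo0 (littleo0_sqr M) => t; rewrite hf; ring. Qed.

Lemma norm2Z (n : nat) (t : R) (v : 'cV[R]_n) : norm2 (t *: v) = `|t| * norm2 v.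
Proof.
rewrite /norm2 -sqrtr_sqr -sqrtrM ?sqr_ge0 // mulr_sumr.
by congr Num.sqrt; apply: eq_bigr => i _; rewrite mxE exprMn.
Qed.

Lemma differentiable_dir_deriv f w h :
  differentiable_at f w -> exists c, has_dir_deriv f w h c.
Proof.
move=> [g hg]; exists ((g^T *m h) 0 0) => eps heps.
have hn : 0 < norm2 h + 1 by rewrite ltr_wpDl ?sqrtr_ge0.
have [delta [hd hdelta]] := hg _ (divr_gt0 heps hn).
exists (delta / (norm2 h + 1)) => [|t ht]; first by rewrite divr_gt0.
have hth : norm2 (t *: h) <= `|t| * (norm2 h + 1).
  by rewrite norm2Z ler_wpM2l ?lerDl.
rewrite ltr_pdivlMr // in ht.
have := hdelta (t *: h) (le_lt_trans hth ht).
rewrite -scalemxAr mxE => /le_trans; apply.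
have -> : eps / (norm2 h + 1) * norm2 (t *: h) = eps * `|t| * (norm2 h / (norm2 h + 1)).
  by rewrite norm2Z; ring.
apply: ler_piMr; first exact: mulr_ge0 (ltW heps) (normr_ge0 t).
by rewrite ler_pdivrMr // mul1r lerDl.
Qed.

End DirectionalDerivative.

Section SquaredLossRisks.
Variables (R : rcfType) (L U d : nat) (X : 'M[R]_(L, d)) (y : 'cV[R]_L)
  (Xu : 'M[R]_(U, d)).

Lemma mulmx_shift_entry (m : nat) (A : 'M[R]_(m, d)) (w h : 'cV[R]_d) (t : R) (i : 'I_m) :
  (A *m (w + t *: h)) i 0 = (A *m w) i 0 + t * (A *m h) i 0.
Proof. by rewrite mulmxDr -scalemxAr mxE [in X in _ + X]mxE. Qed.

Lemma Rsup_dir_deriv (Omega : 'cV[R]_d -> R) (lambda : R) (w h : 'cV[R]_d) :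
  differentiable_at Omega w ->
  exists c, has_dir_deriv (Rsup (@sqloss R) X y Omega lambda) w h c.
Proof.
move=> /(differentiable_dir_deriv h)[cO hO].
pose a i := 1 - y i 0 * (X *m w) i 0; pose b i := - (y i 0 * (X *m h) i 0).
have hloss : has_dir_deriv (fun v => \sum_i sqloss (y i 0 * (X *m v) i 0)) w h
    (\sum_i 2 * (a i * b i)).
  apply: (@dir_deriv_quadratic _ _ _ _ _ _ (\sum_i b i ^+ 2)) => t.
  rewrite mulr_sumr mulr_sumr -!big_split /=; apply: eq_bigr => i _.
  by rewrite /sqloss /a /b mulmx_shift_entry; ring.
by exists (\sum_i 2 * (a i * b i) + lambda * cO); apply: dir_derivD hloss (dir_derivZ _ hO).
Qed.

Definition unlabeled_risk (q : 'cV[R]_U) (w : 'cV[R]_d) : R :=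
  \sum_(j < U) (q j 0 * sqloss ((Xu *m w) j 0) + (1 - q j 0) * sqloss (- (Xu *m w) j 0)).

Definition unlabeled_residual (q : 'cV[R]_U) (w : 'cV[R]_d) : 'cV[R]_U :=
  const_mx 1 + Xu *m w - 2 *: q.

Lemma Rsemi_split (Omega : 'cV[R]_d -> R) (lambda : R) (w : 'cV[R]_d) (q : 'cV[R]_U) :
  Rsemi (@sqloss R) X y Xu Omega lambda w q =
  Rsup (@sqloss R) X y Omega lambda w + unlabeled_risk q w.
Proof. by []. Qed.

Lemma unlabeled_risk_shift (q : 'cV[R]_U) (w h : 'cV[R]_d) (t : R) :
  unlabeled_risk q (w + t *: h) = unlabeled_risk q w
   + t * (2 * (h^T *m (Xu^T *m unlabeled_residual q w)) 0 0)
   + t ^+ 2 * (\sum_j ((Xu *m h) j 0) ^+ 2).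
Proof.
have -> : (h^T *m (Xu^T *m unlabeled_residual q w)) 0 0 =
    \sum_j (Xu *m h) j 0 * unlabeled_residual q w j 0.
  by rewrite mulmxA -trmx_mul mxE; apply: eq_bigr => j _; rewrite mxE.
rewrite /unlabeled_risk mulr_sumr !mulr_sumr -!big_split /=; apply: eq_bigr => j _.
by rewrite !mulmx_shift_entry /unlabeled_residual /sqloss !mxE; ring.
Qed.

Lemma minimizes_Rsemi_iff (Omega : 'cV[R]_d -> R) (lambda : R) (q : 'cV[R]_U)
    (w : 'cV[R]_d) :
  differentiable_at Omega w -> minimizes (Rsup (@sqloss R) X y Omega lambda) w ->
  minimizes (fun v => Rsemi (@sqloss R) X y Xu Omega lambda v q) w <->
  Xu^T *m unlabeled_residual q w = 0.
Proof.
move=> hOm hsup; split=> [hsemi | hstat v].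
  apply/matrixP => k j; rewrite ord1 [RHS]mxE.
  pose h : 'cV[R]_d := delta_mx k 0.
  have [c hc] := Rsup_dir_deriv lambda h hOm.
  have hu : has_dir_deriv (unlabeled_risk q) w h
      (2 * (h^T *m (Xu^T *m unlabeled_residual q w)) 0 0).
    exact: dir_deriv_quadratic (unlabeled_risk_shift q w h).
  have := dir_deriv_min0 hsemi (dir_derivD hc hu).
  rewrite (dir_deriv_min0 hsup hc) add0r /h trmx_delta -rowE mxE => /eqP.
  by rewrite mulf_eq0 pnatr_eq0 => /eqP.
rewrite /= !Rsemi_split -[v](addrNK w) (addrC (v - w) w) -[v - w]scale1r.
rewrite unlabeled_risk_shift hstat mulmx0 mxE !mulr0 addr0 expr1n mul1r.
have := hsup (w + 1 *: (v - w)).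
have : 0 <= \sum_j ((Xu *m (v - w)) j 0) ^+ 2 by apply: sumr_ge0 => j _; apply: sqr_ge0.
lra.
Qed.

Lemma stationarity_condition (q : 'cV[R]_U) (w : 'cV[R]_d) :
  (Xu^T *m q = 2^-1 *: (Xu^T *m const_mx 1 + Xu^T *m Xu *m w)) <->
  Xu^T *m unlabeled_residual q w = 0.
Proof.
rewrite /unlabeled_residual mulmxBr mulmxDr -scalemxAr mulmxA.
have h2 : (2 : R) != 0 by rewrite pnatr_eq0.
split=> [-> | /eqP]; first by rewrite scalerA mulfV // scale1r subrr.
by rewrite subr_eq0 => /eqP ->; rewrite scalerA mulVf // scale1r.
Qed.

Lemma stationary_full_rank_box (q : 'cV[R]_U) (w : 'cV[R]_d) :
  row_free Xu -> in_unit_box q -> Xu^T *m unlabeled_residual q w = 0 ->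
  forall j, -1 <= (Xu *m w) j 0 <= 1.
Proof.
move=> hfree hq hstat j.
have : (unlabeled_residual q w)^T *m Xu == 0 by rewrite -[Xu]trmxK -trmx_mul hstat trmx0.
rewrite mulmx_free_eq0 // => /eqP /(congr1 (fun M : 'rV[R]_U => M 0 j)).
rewrite !mxE; have [hq0 hq1] := hq j.
by move=> hr; apply/andP; split; lra.
Qed.

Lemma sum_sqr_le_card (a c : 'cV[R]_U) :
  in_unit_box c -> \sum_j a j 0 * (1 + a j 0 - 2 * c j 0) = 0 ->
  \sum_j a j 0 ^+ 2 <= U%:R.
Proof.
move=> hc horth.
have hle : \sum_j a j 0 ^+ 2 <= \sum_j (1 + 2 * (a j 0 * (1 + a j 0 - 2 * c j 0))).
  apply: ler_sum => j _; have [hc0 hc1] := hc j.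
  (* [a^2 + 2 a + 1 - 4 a c = (a - (2 c - 1))^2 + 4 c (1 - c)] *)
  have := sqr_ge0 (a j 0 - (2 * c j 0 - 1)); have : 0 <= c j 0 * (1 - c j 0).
    by apply: mulr_ge0; lra.
  nra.
by rewrite big_split /= -mulr_sumr horth mulr0 addr0 sumr_const card_ord in hle.
Qed.

Lemma stationary_norm2_le (q : 'cV[R]_U) (w : 'cV[R]_d) :
  in_unit_box q -> Xu^T *m unlabeled_residual q w = 0 ->
  norm2 (Xu *m w) <= Num.sqrt U%:R.
Proof.
move=> hq hstat; apply/ler_wsqrtr/(sum_sqr_le_card hq).
have horth : ((Xu *m w)^T *m unlabeled_residual q w) 0 0 = 0.
  by rewrite trmx_mul -mulmxA hstat mulmx0 mxE.
by rewrite -[RHS]horth mxE; apply: eq_bigr => j _; rewrite !mxE.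
Qed.

End SquaredLossRisks.

Theorem mainTheorem8 (R : rcfType) (L U d : nat)
  (X : 'M[R]_(L, d)) (y : 'cV[R]_L) (Xu : 'M[R]_(U, d))
  (Omega : 'cV[R]_d -> R) (lambda : R) (wsup : 'cV[R]_d) :
  (0 < L)%N -> (0 < U)%N -> (0 < d)%N ->
  (forall i : 'I_L, y i 0 = 1 \/ y i 0 = -1) ->
  convex_fun Omega -> differentiable_fun Omega -> 0 <= lambda ->
  minimizes (Rsup (@sqloss R) X y Omega lambda) wsup ->
  (* (a) *)
  (forall q : 'cV[R]_U, in_unit_box q ->
     (minimizes (fun w => Rsemi (@sqloss R) X y Xu Omega lambda w q) wsup <->
      Xu^T *m q = 2^-1 *: (Xu^T *m const_mx 1 + Xu^T *m Xu *m wsup)))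
  /\
  (* (b) *)
  (\rank Xu = U ->
   ~ (forall j : 'I_U, -1 <= (Xu *m wsup) j 0 <= 1) ->
   ~ Cphi (@sqloss R) X y Xu Omega lambda wsup)
  /\
  (* (c) *)
  (Num.sqrt (U%:R) < norm2 (Xu *m wsup) ->
   ~ Cphi (@sqloss R) X y Xu Omega lambda wsup).
Proof.
move=> _ _ _ _ _ hdiff _ hmin.
have hiff q := minimizes_Rsemi_iff Xu q (hdiff wsup) hmin.
have hC : Cphi (@sqloss R) X y Xu Omega lambda wsup ->
    exists2 q, in_unit_box q & Xu^T *m unlabeled_residual Xu q wsup = 0.
  by case=> q [hq /hiff hst]; exists q.
split; [|split].
- by move=> q _; rewrite stationarity_condition; apply: hiff.
- move=> hrank hbox /hC[q hq hst]; apply: hbox.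
  by apply: (stationary_full_rank_box _ hq hst); rewrite /row_free hrank.
- move=> hn /hC[q hq hst].
  by have := stationary_norm2_le hq hst; rewrite leNgt hn.
Qed.
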